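(* Let $a,b$ be integers with $-a+1\le b\le -2$ and let $(T_n)_{n\ge0}$ be defined by $T_0=1$, $T_1=a$, $T_2=a^2+b$, $T_{n+3}=aT_{n+2}+bT_{n+1}+T_n$. Then every nonnegative integer $n$ can be uniquely expressed as $n=\sum_{i=0}^N d_iT_i$, where: - $d_i\in\{0,\dots,a-1\}$; - for all $j\ge k\ge 0$, $d_jd_{j-1}\cdots d_{j-k}\le_{\mathrm{lex}}(a-1)(a+b-1)(a+b)\cdots(a+b)$. Here the right-hand word has length $k+1$: it consists of $a-1$, then $a+b-1$, followed by $k-1$ copies of $a+b$ (truncated appropriately when $k\le1$). The relation $\le_{\mathrm{lex}}$ is the lexicographic order on words of equal length. *)

From HB Require Import structures.
From mathcomp Require Import all_boot all_order all_algebra.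
Set Implicit Arguments. Unset Strict Implicit. Unset Printing Implicit Defensive.
Import Order.TTheory GRing.Theory Num.Theory.
Local Open Scope ring_scope.

Fixpoint Tseq (a b : int) (n : nat) {struct n} : int :=
  match n with
  | 0%N => 1
  | 1%N => a
  | 2%N => a ^+ 2 + b
  | S ((S (S m as m1)) as m2) => a * Tseq a b m2 + b * Tseq a b m1 + Tseq a b m
  end.

Fixpoint lex_le (s t : seq int) : bool :=
  match s, t with
  | [::], [::] => true
  | x :: s', y :: t' => (x < y) || ((x == y) && lex_le s' t')
  | _, _ => false
  end.

Definition digit_word (d : nat -> int) (j k : nat) : seq int :=
  [seq d (j - i)%N | i <- iota 0 k.+1].

Definition bound_word (a b : int) (k : nat) : seq int :=
  match k with
  | 0%N => [:: a - 1]
  | S k' => (a - 1) :: (a + b - 1) :: nseq k' (a + b)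
  end.

Definition admissible (a b : int) (d : nat -> int) : Prop :=
  (forall i, 0 <= d i <= a - 1) /\
  (forall j k : nat, (k <= j)%N -> lex_le (digit_word d j k) (bound_word a b k)).

Definition represents (a b : int) (d : nat -> int) (n : nat) : Prop :=
  exists N : nat, (forall i, (N < i)%N -> d i = 0) /\
    (n%:Z = \sum_(i < N.+1) d i * Tseq a b i).

From HB Require Import structures.
From mathcomp Require Import all_boot all_order all_algebra.
From mathcomp Require Import ring lra zify.
Set Implicit Arguments. Unset Strict Implicit. Unset Printing Implicit Defensive.
Import Order.TTheory GRing.Theory Num.Theory.
Local Open Scope ring_scope.

(* The sequence T is positive and strictly increasing, and the largest
   admissible word of length m+1, namely (a-1)(a+b-1)(a+b)...(a+b), has value
   exactly T_(m+1) - 1.  A word lexicographically below that bound has value at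
   most T_(m+1) - 1, and a word above it has larger value, so a nonnegative
   digit sequence is admissible iff each of its prefixes d_m ... d_0 has value
   below T_(m+1).  This is precisely the invariant of the greedy expansion
   (existence), and it forces the leading digit of any admissible expansion of
   n on positions 0..m to be n %/ T_m (uniqueness). *)

Arguments Tseq : simpl never.

Lemma quotient_unique (x y u v t : int) : 0 <= u < t -> 0 <= v < t ->
  x * t + u = y * t + v -> x = y.
Proof.
move=> range_u range_v eq_xy; have t_gt0 : 0 < t by lia.
have small w : 0 <= w < t -> (w %/ t)%Z = 0.
  by move=> range_w; apply: divz_small; rewrite gtz0_abs.
rewrite -[x]addr0 -(small u) // -divzMDl ?gt_eqF // eq_xy.
by rewrite divzMDl ?gt_eqF // small // addr0.
Qed.

Lemma lex_le_take (s t : seq int) n : size s = size t -> lex_le s t ->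
  lex_le (take n s) (take n t).
Proof.
elim: s t n => [|x s IH] [|y t] [|n] //= [size_st].
by case/orP => [-> // | /andP [/eqP -> le_st]]; rewrite eqxx IH ?orbT.
Qed.

Lemma digit_word0 (d : nat -> int) j : digit_word d j 0 = [:: d j].
Proof. by rewrite /digit_word /= subn0. Qed.

Lemma digit_wordS (d : nat -> int) m :
  digit_word d m.+1 m.+1 = d m.+1 :: digit_word d m m.
Proof.
rewrite /digit_word -[iota 0 m.+2]/(0%N :: iota (1 + 0) m.+1) iotaDl /= subn0.
by rewrite -map_comp; congr (_ :: _); apply: eq_map => i /=; rewrite add1n subSS.
Qed.

Lemma digit_word_take (d : nat -> int) j k : (k <= j)%N ->
  digit_word d j k = take k.+1 (digit_word d j j).
Proof. by move=> le_kj; rewrite /digit_word -map_take take_iota (minn_idPl _). Qed.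

Lemma size_digit_word (d : nat -> int) j k : size (digit_word d j k) = k.+1.
Proof. by rewrite size_map size_iota. Qed.

Lemma bound_word_take (a b : int) j k : (k <= j)%N ->
  bound_word a b k = take k.+1 (bound_word a b j).
Proof. by case: k => [|k]; case: j => [|j] //= le_kj; rewrite take_nseq. Qed.

Lemma size_bound_word (a b : int) k : size (bound_word a b k) = k.+1.
Proof. by case: k => //= k; rewrite size_nseq. Qed.

Lemma admissible_of_full_words (a b : int) d : (forall i, 0 <= d i) ->
  (forall j, lex_le (digit_word d j j) (bound_word a b j)) -> admissible a b d.
Proof.
move=> d_ge0 le_full.
have le_words j k : (k <= j)%N -> lex_le (digit_word d j k) (bound_word a b k).
  move=> le_kj; rewrite digit_word_take // (bound_word_take a b le_kj).
  by apply: lex_le_take; rewrite ?size_digit_word ?size_bound_word.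
split=> // i; rewrite d_ge0 /=.
by move: (le_words i 0%N isT); rewrite digit_word0 /= andbT => /orP [/ltW | /eqP ->].
Qed.

Lemma admissible_ge0 (a b : int) d : admissible a b d -> forall i, 0 <= d i.
Proof. by case=> + _ i => /(_ i) /andP []. Qed.

Section Numeration.
Variables a b : int.
Hypotheses (hab1 : - a + 1 <= b) (hab2 : b <= -2).

Local Notation T := (Tseq a b).

Lemma Tseq0 : T 0 = 1. Proof. by []. Qed.
Lemma Tseq1 : T 1 = a. Proof. by []. Qed.
Lemma Tseq2 : T 2 = a ^+ 2 + b. Proof. by []. Qed.
Lemma TseqS m : T m.+3 = a * T m.+2 + b * T m.+1 + T m. Proof. by []. Qed.

Lemma Tseq_incr n : [&& 1 <= T n, T n < T n.+1 & T n.+1 < T n.+2].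
Proof.
elim: n => [|n /and3P [ge1 lt01 lt12]].
  rewrite Tseq0 Tseq1 Tseq2; have sq_a : 2 * a <= a * a by rewrite ler_pM2r; lia.
  by rewrite expr2; apply/and3P; split; lia.
apply/and3P; split; [lia | done |].
have bT : b * T n.+2 <= b * T n.+1 by rewrite ler_wnM2l ?ltW //; lia.
have abT : T n.+2 <= (a + b) * T n.+2 by rewrite ler_peMl; lia.
rewrite TseqS; lia.
Qed.

Lemma Tseq_ge1 n : 1 <= T n.
Proof. by case/and3P: (Tseq_incr n). Qed.

Lemma Tseq_ge0 n : 0 <= T n.
Proof. exact: le_trans ler01 (Tseq_ge1 n). Qed.

Lemma Tseq_ltS n : T n < T n.+1.
Proof. by case/and3P: (Tseq_incr n). Qed.

Lemma Tseq_mono m n : (m <= n)%N -> T m <= T n.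
Proof.
apply: (@homo_leq _ T (fun x y => x <= y)) => [x|y x z|i].
- exact: le_refl.
- exact: le_trans.
- exact: ltW (Tseq_ltS i).
Qed.

Lemma lt_nat_Tseq n : n%:Z < T n.+1.
Proof.
elim: n => [|n IH]; first exact: lt_le_trans ltr01 (Tseq_ge1 1).
by have := Tseq_ltS n.+1; lia.
Qed.

(* [bound_digit c] is letter c of the infinite word (a-1)(a+b-1)(a+b)(a+b)...;
   [bound_word_from c m] is its factor of length m+1 starting at letter c, and
   [bound_value c m] the value of that factor written at positions m, ..., 0. *)
Definition bound_digit (c : nat) : int :=
  match c with 0%N => a - 1 | 1%N => a + b - 1 | _ => a + b end.

Fixpoint bound_word_from (c m : nat) : seq int :=
  if m is m'.+1 then bound_digit c :: bound_word_from c.+1 m'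
  else [:: bound_digit c].

Fixpoint bound_value (c m : nat) : int :=
  if m is m'.+1 then bound_digit c * T m + bound_value c.+1 m'
  else bound_digit c.

Lemma bound_word_from0 m : bound_word_from 0 m = bound_word a b m.
Proof.
suff shift c k : bound_word_from c.+2 k = nseq k.+1 (a + b).
  by case: m => [|[|m]] //=; rewrite shift.
by elim: k c => [|k IH] c //=; rewrite IH.
Qed.

Lemma bound_value_shift c m : bound_value c.+2 m = bound_value 2 m.
Proof. by elim: m c => [|m IH] c //=; rewrite IH (IH 1%N). Qed.

Lemma bound_digit_ge0 c : 0 <= bound_digit c.
Proof. by case: c => [|[|c]] /=; lia. Qed.

Lemma bound_value_ge0 c m : 0 <= bound_value c m.
Proof.
elim: m c => [|m IH] c /=; first exact: bound_digit_ge0.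
by rewrite addr_ge0 ?mulr_ge0 ?bound_digit_ge0 ?Tseq_ge0.
Qed.

Lemma bound_value2E k :
  bound_value 2 k = T k.+3 - 1 - (a - 1) * T k.+2 - (a + b - 1) * T k.+1.
Proof.
elim: k => [|k IH]; first by rewrite /= TseqS Tseq0 Tseq1 Tseq2; ring.
by rewrite /= bound_value_shift IH (TseqS k.+1); ring.
Qed.

Lemma bound_value0 m : bound_value 0 m = T m.+1 - 1.
Proof.
case: m => [|[|k]] /=; first by rewrite Tseq1.
  by rewrite Tseq1 Tseq2; ring.
by rewrite bound_value2E; ring.
Qed.

Lemma bound_value2_lt k : bound_value 2 k < T k.+1.
Proof.
case: k => [|[|k]] /=; first by rewrite Tseq1; lia.
  have : a <= - (b + 1) * a by rewrite ler_peMl; lia.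
  by rewrite Tseq1 Tseq2 expr2; lia.
have : T k.+2 <= - (b + 1) * T k.+2 by rewrite ler_peMl ?Tseq_ge0 //; lia.
by rewrite bound_value_shift bound_value2E; have := Tseq_ltS k.+1; lia.
Qed.

Lemma bound_value_succ_lt c m : bound_value c.+1 m < T m.+1.
Proof.
apply: le_lt_trans (bound_value2_lt m).
case: m => [|m] /=; first by case: c => [|c] /=; lia.
rewrite !bound_value_shift lerD2r ler_wpM2r ?Tseq_ge0 //.
by case: c => [|c] /=; lia.
Qed.

Definition digit_value (d : nat -> int) (m : nat) : int :=
  \sum_(i < m.+1) d i * T i.

Lemma digit_value0 d : digit_value d 0 = d 0%N.
Proof. by rewrite /digit_value big_ord1 Tseq0 mulr1. Qed.

Lemma digit_valueS d m : digit_value d m.+1 = d m.+1 * T m.+1 + digit_value d m.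
Proof. by rewrite /digit_value big_ord_recr /= addrC. Qed.

Lemma eq_digit_value d1 d2 m : (forall i, (i <= m)%N -> d1 i = d2 i) ->
  digit_value d1 m = digit_value d2 m.
Proof. by move=> eq_d; apply: eq_bigr => i _; rewrite eq_d // -ltnS. Qed.

Lemma digit_value_widen d N m : (forall i, (N < i)%N -> d i = 0) -> (N <= m)%N ->
  digit_value d m = digit_value d N.
Proof.
move=> d0; elim: m => [|m IH]; first by rewrite leqn0 => /eqP ->.
rewrite leq_eqVlt => /orP [/eqP -> // | ltNm].
by rewrite digit_valueS d0 // mul0r add0r IH.
Qed.

Lemma digit_value_ge0 d m : (forall i, 0 <= d i) -> 0 <= digit_value d m.
Proof. by move=> d_ge0; apply: sumr_ge0 => i _; rewrite mulr_ge0 ?Tseq_ge0. Qed.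

(* When the leading digit is below the bound letter, the rest is only known to
   be admissible, which caps its value at T_(m+1) - 1: hence the hypothesis on
   all shorter prefixes. *)
Lemma digit_value_le_bound d m c :
  (forall j, (j < m)%N -> lex_le (digit_word d j j) (bound_word a b j)) ->
  lex_le (digit_word d m m) (bound_word_from c m) ->
  digit_value d m <= bound_value c m.
Proof.
elim: m c => [|m IH] c adm_prefix.
  by rewrite digit_value0 digit_word0 /= andbT => /orP [/ltW | /eqP ->].
rewrite digit_wordS digit_valueS /= => /orP [lt_d | /andP [/eqP -> le_rest]].
  have le_prefix : digit_value d m <= T m.+1 - 1.
    rewrite -bound_value0 IH ?bound_word_from0 ?adm_prefix // => j lt_jm.
    exact/adm_prefix/ltnW.
  have lt_lead : d m.+1 * T m.+1 <= (bound_digit c - 1) * T m.+1.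
    by rewrite ler_wpM2r ?Tseq_ge0 //; lia.
  have := bound_value_ge0 c.+1 m; lia.
by rewrite lerD2l IH // => j lt_jm; apply/adm_prefix/ltnW.
Qed.

Lemma digit_value_gt_bound d m c : (forall i, 0 <= d i) ->
  ~~ lex_le (digit_word d m m) (bound_word_from c m) ->
  bound_value c m < digit_value d m.
Proof.
move=> d_ge0; elim: m c => [|m IH] c.
  by rewrite digit_value0 digit_word0 /= andbT; case: ltrgtP.
rewrite digit_wordS digit_valueS /=.
case: ltrgtP => //= [gt_d _ | -> /IH]; last by rewrite ltrD2l.
have gt_lead : (bound_digit c + 1) * T m.+1 <= d m.+1 * T m.+1.
  by rewrite ler_wpM2r ?Tseq_ge0 //; lia.
have := bound_value_succ_lt c m; have := digit_value_ge0 m d_ge0; lia.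
Qed.

Lemma admissible_value_lt d : admissible a b d -> forall m, digit_value d m < T m.+1.
Proof.
case=> _ adm m.
have le_full j : lex_le (digit_word d j j) (bound_word a b j) by apply: adm.
have := @digit_value_le_bound d m 0%N (fun j _ => le_full j).
by rewrite bound_word_from0 bound_value0 => /(_ (le_full m)); lia.
Qed.

Lemma admissible_of_value_lt d : (forall i, 0 <= d i) ->
  (forall m, digit_value d m < T m.+1) -> admissible a b d.
Proof.
move=> d_ge0 lt_T; apply: admissible_of_full_words => // j.
rewrite -bound_word_from0; apply: contraT => /(digit_value_gt_bound d_ge0).
by rewrite bound_value0; have := lt_T j; lia.
Qed.

Lemma admissible_digits_eq d1 d2 m : admissible a b d1 -> admissible a b d2 ->
  digit_value d1 m = digit_value d2 m -> forall i, (i <= m)%N -> d1 i = d2 i.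
Proof.
move=> A1 A2.
have prefix_range d k : admissible a b d -> 0 <= digit_value d k < T k.+1.
  move=> A; rewrite admissible_value_lt // andbT.
  by apply: digit_value_ge0 => i; apply: admissible_ge0 A i.
elim: m => [|m IH] eq_val i.
  by rewrite leqn0 => /eqP ->; move: eq_val; rewrite !digit_value0.
move: eq_val; rewrite !digit_valueS => eq_val.
have eq_lead : d1 m.+1 = d2 m.+1.
  exact: quotient_unique (prefix_range _ m A1) (prefix_range _ m A2) eq_val.
move: eq_val; rewrite eq_lead => /addrI /IH eq_low.
by rewrite leq_eqVlt => /orP [/eqP -> // | /eq_low].
Qed.

Definition Tnat (k : nat) : nat := `|T k|%N.

Lemma Tnat_eq k : (Tnat k)%:Z = T k.
Proof. by rewrite /Tnat gez0_abs ?Tseq_ge0. Qed.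

Lemma Tnat_gt0 k : (0 < Tnat k)%N.
Proof. by rewrite -ltz_nat Tnat_eq; exact: lt_le_trans ltr01 (Tseq_ge1 k). Qed.

Lemma lt_Tseq_of_lt_Tnat n k j : (n < Tnat k)%N -> (k <= j)%N -> n%:Z < T j.
Proof.
by move=> lt_n le_kj; apply: lt_le_trans (Tseq_mono le_kj); rewrite -Tnat_eq ltz_nat.
Qed.

Fixpoint greedy_digits (N n : nat) : nat -> int :=
  if N is N'.+1 then
    fun i => if i == N then (n %/ Tnat N)%:Z else greedy_digits N' (n %% Tnat N) i
  else fun i => if i == 0%N then n%:Z else 0.

Lemma greedy_digits_ge0 N n i : 0 <= greedy_digits N n i.
Proof. by elim: N n => [|N IH] n /=; case: ifP. Qed.

Lemma greedy_digits_zero N n i : (N < i)%N -> greedy_digits N n i = 0.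
Proof.
elim: N n => [|N IH] n /=; first by case: i.
by move=> lt_Ni; rewrite ifN_eq ?IH 1?ltnW // eq_sym neq_ltn lt_Ni.
Qed.

Lemma greedy_digits_rest N n i : (i <= N)%N ->
  greedy_digits N.+1 n i = greedy_digits N (n %% Tnat N.+1) i.
Proof. by move=> le_iN /=; rewrite ifN_eq // neq_ltn ltnS le_iN. Qed.

Lemma greedy_digits_value N n : (n < Tnat N.+1)%N ->
  digit_value (greedy_digits N n) N = n%:Z.
Proof.
elim: N n => [|N IH] n lt_n; first by rewrite digit_value0.
rewrite digit_valueS (eq_digit_value (@greedy_digits_rest N n)) /= eqxx.
rewrite IH ?ltn_pmod ?Tnat_gt0 //.
by rewrite -(Tnat_eq N.+1) -PoszM -PoszD -divn_eq.
Qed.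

Lemma greedy_digits_value_widen N n j : (n < Tnat N.+1)%N -> (N <= j)%N ->
  digit_value (greedy_digits N n) j = n%:Z.
Proof.
move=> lt_n le_Nj.
by rewrite (digit_value_widen (@greedy_digits_zero N n) le_Nj) greedy_digits_value.
Qed.

Lemma greedy_digits_value_lt N n : (n < Tnat N.+1)%N ->
  forall j, digit_value (greedy_digits N n) j < T j.+1.
Proof.
elim: N n => [|N IH] n lt_n j.
  by rewrite greedy_digits_value_widen // (lt_Tseq_of_lt_Tnat lt_n).
have [le_Nj | lt_jN] := leqP N.+1 j.
  by rewrite greedy_digits_value_widen // (lt_Tseq_of_lt_Tnat lt_n).
have le_rest i : (i <= j)%N ->
    greedy_digits N.+1 n i = greedy_digits N (n %% Tnat N.+1) i.
  by move=> le_ij; apply/greedy_digits_rest/(leq_trans le_ij).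
by rewrite (eq_digit_value le_rest) IH ?ltn_pmod ?Tnat_gt0.
Qed.

Lemma represents_value d n : represents a b d n ->
  exists N, (forall i, (N < i)%N -> d i = 0) /\
            forall M, (N <= M)%N -> digit_value d M = n%:Z.
Proof.
case=> N [d0 val_d]; exists N; split=> // M le_NM.
by rewrite (digit_value_widen d0 le_NM).
Qed.

Lemma exists_admissible_representation n :
  exists d, admissible a b d /\ represents a b d n.
Proof.
have lt_n : (n < Tnat n.+1)%N by rewrite -ltz_nat Tnat_eq lt_nat_Tseq.
exists (greedy_digits n n); split.
  apply: admissible_of_value_lt; first exact: greedy_digits_ge0.
  exact: greedy_digits_value_lt.
exists n; split; first exact: greedy_digits_zero.
by rewrite -(greedy_digits_value lt_n).
Qed.

Lemma admissible_representation_unique d1 d2 n :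
  admissible a b d1 -> represents a b d1 n ->
  admissible a b d2 -> represents a b d2 n -> d1 =1 d2.
Proof.
move=> A1 /represents_value [N1 [z1 v1]] A2 /represents_value [N2 [z2 v2]] i.
have [le_iN | ] := leqP i (maxn N1 N2).
  by apply: (admissible_digits_eq A1 A2 _ le_iN); rewrite v1 ?v2 ?leq_maxl ?leq_maxr.
by rewrite gtn_max => /andP [lt1 lt2]; rewrite z1 // z2.
Qed.

End Numeration.

Theorem proposition2p2 (a b : int) (hab1 : - a + 1 <= b) (hab2 : b <= -2) :
  forall n : nat,
    (exists d : nat -> int, admissible a b d /\ represents a b d n) /\
    (forall d1 d2 : nat -> int,
        admissible a b d1 -> represents a b d1 n ->
        admissible a b d2 -> represents a b d2 n ->
        forall i, d1 i = d2 i).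
Proof.
move=> n; split; first exact: exists_admissible_representation.
by move=> d1 d2; apply: admissible_representation_unique.
Qed.
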